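(* Let $p\geq 5$ be an integer and $s=\frac1p$. There exist integers $n_0,n_1>0$ such that $[A_{n,s}^{-1}]=\left[2\left(n-\frac12\right)^s\right]$ for every even integer $n\geq n_0$, and $[B_{n,s}^{-1}]=\left[-2\left(n-\frac12\right)^s\right]$ for every odd integer $n\geq n_1$.
   Context: For an integer $n\geq1$ and real $0<s<1$: $A_{n,s}=\left(\frac{1}{n^s}-\frac{1}{(n+1)^s}\right)+\left(\frac{1}{(n+2)^s}-\frac{1}{(n+3)^s}\right)+\cdots$ and $B_{n,s}=\left(-\frac{1}{n^s}+\frac{1}{(n+1)^s}\right)+\left(-\frac{1}{(n+2)^s}+\frac{1}{(n+3)^s}\right)+\cdots$, i.e. $A_{n,s}=\sum_{k\geq 0}\frac{(-1)^k}{(n+k)^s}$ and $B_{n,s}=-A_{n,s}$. $[x]$ denotes the integer part (floor) of $x$. *)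

From Stdlib Require Import Reals.
From Coquelicot Require Import Coquelicot.
Open Scope R_scope.

Definition A_ns (n : nat) (s : R) : R :=
  Series (fun k : nat => (-1) ^ k / Rpower (INR (n + k)) s).

Definition B_ns (n : nat) (s : R) : R :=
  Series (fun k : nat => - ((-1) ^ k / Rpower (INR (n + k)) s)).

(* [x] = integer part (floor); Stdlib's Int_part x = up x - 1 = floor x *)
Definition floorR (x : R) : Z := Int_part x.

(* Put m = n - 1/2, f x = x^(-s) and let h x be half the central second difference
   of f with step 1/2.  Since (-1)^k f(n+k) is the telescoping half-sum of
   (-1)^k f(m+k) minus (-1)^k h(n+k), and h is nonnegative and decreasing,
   A_{n,s} = f(m)/2 - D with 0 <= D <= f''(m)/4; hence 1/A_{n,s} differs from
   X = 2 m^s by O(m^(s-2)).  On the other hand X^p = 2^(p-1) (2n-1) is not the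
   p-th power of an integer, so by the mean value theorem X lies at distance
   >> m^(s-1) from every integer.  Thus 1/A_{n,s} and X have the same integer part
   for n large. *)

From Stdlib Require Import Reals ZArith Lra Lia.
From Coquelicot Require Import Coquelicot.
Open Scope R_scope.

Lemma Rpower_gt_0 (x y : R) : 0 < Rpower x y.
Proof. apply exp_pos. Qed.

Lemma Rle_Rpower_l_neg (a b c : R) : c <= 0 -> 0 < a <= b -> Rpower b c <= Rpower a c.
Proof.
  intros Hc Hab. replace c with (- - c) by ring. rewrite (Rpower_Ropp a), (Rpower_Ropp b).
  apply Rinv_le_contravar; [apply Rpower_gt_0 | apply Rle_Rpower_l; lra].
Qed.

Lemma MVT_is_derive (g dg : R -> R) (a b : R) : a <= b ->
  (forall y, a <= y <= b -> is_derive g y (dg y)) ->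
  exists c, a <= c <= b /\ g b - g a = dg c * (b - a).
Proof.
  intros Hab Hd.
  destruct (MVT_gen g a b dg) as [c Hc]; rewrite ?Rmin_left, ?Rmax_right by lra.
  - intros y Hy. apply Hd; lra.
  - intros y Hy. apply continuity_pt_filterlim, (@ex_derive_continuous R_AbsRing).
    exists (dg y). apply Hd; lra.
  - rewrite Rmin_left, Rmax_right in Hc by lra. now exists c.
Qed.

Lemma second_difference_bounds (g dg d2g : R -> R) (x d U : R) : 0 < d ->
  (forall y, x - d <= y <= x + d -> is_derive g y (dg y)) ->
  (forall y, x - d <= y <= x + d -> is_derive dg y (d2g y)) ->
  (forall y, x - d <= y <= x + d -> 0 <= d2g y <= U) ->
  0 <= g (x + d) + g (x - d) - 2 * g x <= 2 * d ^ 2 * U.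
Proof.
  intros Hd Hg Hdg HU.
  destruct (MVT_is_derive g dg x (x + d)) as [c1 [Hc1 E1]]; [lra | intros; apply Hg; lra |].
  destruct (MVT_is_derive g dg (x - d) x) as [c2 [Hc2 E2]]; [lra | intros; apply Hg; lra |].
  destruct (MVT_is_derive dg d2g c2 c1) as [c [Hc E]]; [lra | intros; apply Hdg; lra |].
  replace (g (x + d) + g (x - d) - 2 * g x) with (d * (d2g c * (c1 - c2))) by nra.
  destruct (HU c) as [HU0 HU1]; [lra |].
  split; [apply Rmult_le_pos; [lra | apply Rmult_le_pos; lra] |].
  replace (2 * d ^ 2 * U) with (d * (U * (2 * d))) by ring.
  apply Rmult_le_compat_l; [lra |]. apply Rmult_le_compat; lra.
Qed.

Lemma is_derive_shift (g : R -> R) (c x l : R) :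
  is_derive g (x + c) l -> is_derive (fun y => g (y + c)) x l.
Proof.
  intro Hg.
  assert (Hc : is_derive (fun y => y + c) x 1) by (auto_derive; [easy | ring]).
  pose proof (is_derive_comp g (fun y => y + c) x l 1 Hg Hc) as H.
  rewrite <- (scal_one l). exact H.
Qed.

Lemma alternating_series_bounds (u : nat -> R) :
  (forall k, u (S k) <= u k) -> is_lim_seq u 0 ->
  exists l : R, is_series (fun k => (-1) ^ k * u k) l /\ 0 <= l <= u 0%nat.
Proof.
  intros Hdecr Hlim. apply is_lim_seq_Reals in Hlim.
  destruct (alternated_series u Hdecr Hlim) as [l Hl].
  exists l. split.
  - apply is_series_Reals, Hl.
  - pose proof (alternated_series_ineq u l 0 Hdecr Hlim Hl) as Hb.
    pose proof (Hdecr 0%nat). simpl in Hb. unfold tg_alt in Hb. simpl in Hb. lra.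
Qed.

Lemma is_series_half_telescope (a b : nat -> R) (la lb : R) :
  is_series a la -> is_series b lb ->
  is_series (fun k => (a k - a (S k)) / 2 - b k) (a 0%nat / 2 - lb).
Proof.
  intros Ha Hb.
  assert (Hshift : is_series (fun k => a (S k)) (la - a 0%nat)).
  { apply is_series_incr_1. unfold plus. simpl.
    replace (la - a 0%nat + a 0%nat) with la by ring. exact Ha. }
  pose proof (is_series_scal_r (/ 2) _ _ (is_series_minus _ _ _ _ Ha Hshift)) as Htele.
  replace (a 0%nat / 2 - lb) with ((la - (la - a 0%nat)) * / 2 - lb) by field.
  exact (is_series_minus _ _ _ _ Htele Hb).
Qed.

Section NegativePower.

Variable s : R.
Hypothesis s_pos : 0 < s.

Definition f (x : R) : R := Rpower x (- s).
Definition f' (x : R) : R := - s * Rpower x (- s - 1).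
Definition f'' (x : R) : R := s * (s + 1) * Rpower x (- s - 2).

Lemma f_pos (x : R) : 0 < f x.
Proof. apply Rpower_gt_0. Qed.

Lemma f_decr (x y : R) : 0 < x <= y -> f y <= f x.
Proof. intro Hxy. apply Rle_Rpower_l_neg; lra. Qed.

Lemma f''_nonneg (x : R) : 0 <= f'' x.
Proof. unfold f''. pose proof (Rpower_gt_0 x (- s - 2)). apply Rmult_le_pos; nra. Qed.

Lemma f''_decr (x y : R) : 0 < x <= y -> f'' y <= f'' x.
Proof.
  intro Hxy. unfold f''. apply Rmult_le_compat_l; [nra |].
  apply Rle_Rpower_l_neg; lra.
Qed.

Lemma is_derive_f (x : R) : 0 < x -> is_derive f x (f' x).
Proof. intro Hx. apply is_derive_Reals, derivable_pt_lim_power, Hx. Qed.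

Lemma is_derive_f' (x : R) : 0 < x -> is_derive f' x (f'' x).
Proof.
  intro Hx. unfold f', f''.
  replace (s * (s + 1) * Rpower x (- s - 2)) with (- s * ((- s - 1) * Rpower x (- s - 1 - 1)))
    by (replace (- s - 1 - 1) with (- s - 2) by ring; ring).
  apply is_derive_scal, is_derive_Reals, derivable_pt_lim_power, Hx.
Qed.

Lemma is_lim_seq_f_shift (c : R) : 0 < c -> is_lim_seq (fun k => f (c + INR k)) 0.
Proof.
  intro Hc. apply is_lim_seq_Reals. intros eps Heps.
  destruct (INR_unbounded (Rpower (/ eps) (/ s))) as [N HN].
  exists N. intros k Hk. unfold Rdist. rewrite Rminus_0_r, Rabs_pos_eq by (left; apply f_pos).
  unfold f. rewrite Rpower_Ropp.
  assert (Hroot : Rpower (Rpower (/ eps) (/ s)) s = / eps).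
  { rewrite Rpower_mult, Rinv_l, Rpower_1 by (apply Rinv_0_lt_compat in Heps; lra). reflexivity. }
  rewrite <- (Rinv_inv eps). apply Rinv_lt_contravar.
  - apply Rmult_lt_0_compat; [apply Rinv_0_lt_compat, Heps | apply Rpower_gt_0].
  - rewrite <- Hroot. apply Rlt_Rpower_l; [exact s_pos |].
    split; [apply Rpower_gt_0 |]. apply le_INR in Hk. lra.
Qed.

Definition h (x : R) : R := (f (x + / 2) + f (x - / 2) - 2 * f x) / 2.

Lemma h_bounds (x : R) : / 2 < x -> 0 <= h x <= f'' (x - / 2) / 4.
Proof.
  intro Hx.
  destruct (second_difference_bounds f f' f'' x (/ 2) (f'' (x - / 2))) as [H0 H1].
  - lra.
  - intros y Hy. apply is_derive_f. lra.
  - intros y Hy. apply is_derive_f'. lra.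
  - intros y Hy. split; [apply f''_nonneg | apply f''_decr; lra].
  - unfold h. split; lra.
Qed.

Lemma h_le_f (x : R) : / 2 < x -> h x <= f (x - / 2).
Proof.
  intro Hx. unfold h.
  pose proof (f_pos x). pose proof (f_decr (x - / 2) (x + / 2) ltac:(lra)). lra.
Qed.

(* [2 (h x - h (x + 1))] is the second difference at [x] of [y |-> f y - f (y + 1)],
   which is convex because [f''] is decreasing. *)
Lemma h_decr (x : R) : / 2 < x -> h (x + 1) <= h x.
Proof.
  intro Hx.
  destruct (second_difference_bounds (fun y => f y - f (y + 1)) (fun y => f' y - f' (y + 1))
              (fun y => f'' y - f'' (y + 1)) x (/ 2) (f'' (x - / 2))) as [H0 _].
  - lra.
  - intros y Hy. apply (is_derive_minus f).
    + apply is_derive_f. lra.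
    + apply is_derive_shift, is_derive_f. lra.
  - intros y Hy. apply (is_derive_minus f').
    + apply is_derive_f'. lra.
    + apply is_derive_shift, is_derive_f'. lra.
  - intros y Hy. pose proof (f''_nonneg (y + 1)).
    pose proof (f''_decr y (y + 1) ltac:(lra)). pose proof (f''_decr (x - / 2) y ltac:(lra)).
    lra.
  - unfold h. replace (x + 1 - / 2) with (x + / 2) by field.
    replace (x - / 2 + 1) with (x + / 2) in H0 by field.
    replace (x + / 2 + 1) with (x + 1 + / 2) in H0 by field.
    lra.
Qed.

Lemma A_ns_decomposition (n : nat) : (1 <= n)%nat ->
  exists D, A_ns n s = f (INR n - / 2) / 2 - D /\ 0 <= D <= f'' (INR n - / 2) / 4.
Proof.
  intro Hn. apply le_INR in Hn. simpl in Hn.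
  set (m := INR n - / 2).
  set (u := fun k => f (m + INR k)).
  set (v := fun k => h (INR n + INR k)).
  assert (Hu_decr : forall k, u (S k) <= u k).
  { intro k. unfold u. rewrite S_INR. apply f_decr. pose proof (pos_INR k). unfold m. lra. }
  assert (Hu_lim : is_lim_seq u 0) by (apply is_lim_seq_f_shift; unfold m; lra).
  assert (Hv_decr : forall k, v (S k) <= v k).
  { intro k. unfold v. rewrite S_INR, <- Rplus_assoc. apply h_decr. pose proof (pos_INR k). lra. }
  assert (Hv_lim : is_lim_seq v 0).
  { apply (is_lim_seq_le_le (fun _ => 0) v u); [| apply is_lim_seq_const | exact Hu_lim].
    intro k. unfold u, v. pose proof (pos_INR k).
    replace (m + INR k) with (INR n + INR k - / 2) by (unfold m; ring).
    split; [apply h_bounds | apply h_le_f]; lra. }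
  destruct (alternating_series_bounds u Hu_decr Hu_lim) as [lu [Hlu _]].
  destruct (alternating_series_bounds v Hv_decr Hv_lim) as [lv [Hlv Hlv_bounds]].
  exists lv. split.
  - unfold A_ns. apply is_series_unique.
    replace (f m) with ((-1) ^ 0 * u 0%nat) by (unfold u; simpl; rewrite Rplus_0_r; ring).
    eapply is_series_ext; [| exact (is_series_half_telescope _ _ _ _ Hlu Hlv)]. intro k.
    unfold u, v, h. rewrite plus_INR, S_INR.
    replace ((-1) ^ k / Rpower (INR n + INR k) s) with ((-1) ^ k * f (INR n + INR k))
      by (unfold f, Rdiv; rewrite Rpower_Ropp; ring).
    replace (m + INR k) with (INR n + INR k - / 2) by (unfold m; ring).
    replace (m + (INR k + 1)) with (INR n + INR k + / 2) by (unfold m; field).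
    simpl. field.
  - destruct (h_bounds (INR n)) as [_ Hh]; [lra |].
    unfold v in Hlv_bounds. simpl in Hlv_bounds. rewrite Rplus_0_r in Hlv_bounds.
    fold m in Hh. lra.
Qed.

End NegativePower.

Lemma Rabs_inv_sub_le (a D : R) : 0 < a -> 0 <= D <= a / 2 ->
  Rabs (/ (a - D) - / a) <= 2 * D / a ^ 2.
Proof.
  intros Ha HD.
  replace (/ (a - D) - / a) with (D / (a * (a - D))) by (field; lra).
  rewrite Rabs_pos_eq by (apply Rmult_le_pos; [lra | left; apply Rinv_0_lt_compat; nra]).
  replace (2 * D / a ^ 2) with (D * / (a * (a / 2))) by (field; lra).
  apply Rmult_le_compat_l; [lra |].
  apply Rinv_le_contravar; nra.
Qed.

Lemma A_ns_inv_error (s : R) (n : nat) : 0 < s <= 1 -> (2 <= n)%nat ->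
  let m := INR n - / 2 in
  Rabs (/ A_ns n s - 2 * Rpower m s) <= 4 * Rpower m s / m ^ 2.
Proof.
  intros Hs Hn m.
  assert (Hm : 3 / 2 <= m) by (apply le_INR in Hn; simpl in Hn; unfold m; lra).
  destruct (A_ns_decomposition s ltac:(lra) n ltac:(lia)) as [D [HA HD]].
  fold m in HA, HD.
  set (t := Rpower m s) in *.
  assert (Ht : 0 < t) by apply Rpower_gt_0.
  assert (Hm2 : 9 / 4 <= m ^ 2) by nra.
  assert (Hf : f s m = / t) by apply Rpower_Ropp.
  assert (Hf'' : f'' s m = s * (s + 1) / (t * m ^ 2)).
  { unfold f''. replace (- s - 2) with (- s + - INR 2) by (simpl; ring).
    rewrite Rpower_plus, !Rpower_Ropp, Rpower_pow by lra. fold t. field; nra. }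
  set (a := / (2 * t)).
  assert (Ha : 0 < a) by (apply Rinv_0_lt_compat; lra).
  assert (HDa : D <= a / m ^ 2).
  { rewrite Hf'' in HD. unfold a.
    apply (Rle_trans _ (s * (s + 1) / (t * m ^ 2) / 4)); [lra |].
    apply (Rmult_le_reg_r (4 * t * m ^ 2)); [nra |].
    replace (s * (s + 1) / (t * m ^ 2) / 4 * (4 * t * m ^ 2)) with (s * (s + 1)) by (field; nra).
    replace (/ (2 * t) / m ^ 2 * (4 * t * m ^ 2)) with 2 by (field; nra).
    nra. }
  assert (HDa2 : D <= a / 2).
  { apply (Rle_trans _ _ _ HDa). apply Rmult_le_compat_l; [lra |].
    apply Rinv_le_contravar; nra. }
  replace (/ A_ns n s) with (/ (a - D)) by (rewrite HA, Hf; unfold a; f_equal; field; lra).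
  replace (2 * t) with (/ a) by (unfold a; field; lra).
  apply (Rle_trans _ _ _ (Rabs_inv_sub_le a D Ha ltac:(lra))).
  apply (Rle_trans _ (2 * (a / m ^ 2) / a ^ 2)).
  - apply Rmult_le_compat_r; [apply Rlt_le, Rinv_0_lt_compat; nra | lra].
  - right. unfold a. field. nra.
Qed.

Lemma Zpow_succ_neq_pow2_mul_odd (q : nat) (k r : Z) : (1 <= q)%nat -> Z.odd r = true ->
  (k ^ Z.of_nat (S q) <> 2 ^ Z.of_nat q * r)%Z.
Proof.
  intros Hq Hr E.
  destruct (Z.Even_or_Odd k) as [[j Hj] | [j Hj]]; subst k.
  - rewrite Z.pow_mul_l, Nat2Z.inj_succ, Z.pow_succ_r, (Z.mul_comm 2), <- Z.mul_assoc in E by lia.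
    apply Z.mul_reg_l in E; [| apply Z.pow_nonzero; lia].
    rewrite <- E, Z.odd_mul in Hr. discriminate.
  - apply (f_equal Z.odd) in E.
    rewrite Z.odd_pow, Z.odd_mul, Z.add_comm, Z.odd_add_mul_2 in E by lia.
    replace (Z.of_nat q) with (Z.succ (Z.of_nat q - 1)) in E by lia.
    rewrite Z.pow_succ_r, Z.odd_mul in E by lia. discriminate.
Qed.

Lemma Rabs_pow_sub_le (q : nat) (a b M : R) : 0 <= a <= M -> 0 <= b <= M ->
  Rabs (a ^ S q - b ^ S q) <= INR (S q) * M ^ q * Rabs (a - b).
Proof.
  assert (Hle : forall x y, 0 <= x <= y -> y <= M ->
            y ^ S q - x ^ S q <= INR (S q) * M ^ q * (y - x)).
  { intros x y Hxy HyM.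
    destruct (MVT_is_derive (fun z => z ^ S q) (fun z => INR (S q) * z ^ q) x y) as [c [Hc E]].
    - lra.
    - intros z _. auto_derive; [easy | simpl; ring].
    - rewrite E. apply Rmult_le_compat_r; [lra |].
      apply Rmult_le_compat_l; [apply pos_INR | apply pow_incr; lra]. }
  intros Ha Hb. destruct (Rle_dec a b).
  - rewrite Rabs_minus_sym, (Rabs_minus_sym a), !Rabs_pos_eq; [apply Hle | | ]; try lra.
    pose proof (pow_incr a b (S q)). lra.
  - rewrite !Rabs_pos_eq; [apply Hle | | ]; try lra.
    pose proof (pow_incr b a (S q)). lra.
Qed.

Lemma Rabs_IZR_sub_two_root_ge (q n : nat) (t : R) (k : Z) : (1 <= q)%nat -> 0 < t ->
  t ^ S q = INR n - / 2 -> 0 <= IZR k <= 2 * t + 1 ->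
  / (INR (S q) * (2 * t + 1) ^ q) <= Rabs (IZR k - 2 * t).
Proof.
  intros Hq Ht Hroot Hk.
  assert (HP : 0 < INR (S q) * (2 * t + 1) ^ q)
    by (apply Rmult_lt_0_compat; [apply lt_0_INR; lia | apply pow_lt; lra]).
  assert (Hpow : (2 * t) ^ S q = IZR (2 ^ Z.of_nat q * (2 * Z.of_nat n - 1))).
  { rewrite Rpow_mult_distr, Hroot, mult_IZR, <- pow_IZR, minus_IZR, mult_IZR,
      <- INR_IZR_INZ. simpl. field. }
  assert (Hgap : 1 <= Rabs (IZR k ^ S q - (2 * t) ^ S q)).
  { rewrite Hpow, pow_IZR, <- minus_IZR, Rabs_Zabs. apply IZR_le.
    assert (Hodd : Z.odd (2 * Z.of_nat n - 1) = true) by (rewrite Z.odd_sub, Z.odd_mul; easy).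
    pose proof (Zpow_succ_neq_pow2_mul_odd q k _ Hq Hodd). lia. }
  pose proof (Rabs_pow_sub_le q (IZR k) (2 * t) (2 * t + 1) ltac:(lra) ltac:(lra)).
  apply (Rmult_le_reg_l (INR (S q) * (2 * t + 1) ^ q)); [exact HP |].
  rewrite Rinv_r by lra. lra.
Qed.

Lemma Int_part_stable (X Y d : R) : 0 < X ->
  (forall k : Z, 0 <= IZR k <= X + 1 -> d <= Rabs (IZR k - X)) ->
  Rabs (Y - X) < d ->
  Int_part Y = Int_part X /\ Int_part (- Y) = Int_part (- X).
Proof.
  intros HX Hd HYX.
  destruct (base_Int_part X) as [Hlow Hup].
  set (k := Int_part X) in *.
  assert (Hk : 0 <= IZR k).
  { apply IZR_le. assert (Hk1 : -1 < IZR k) by lra. apply lt_IZR in Hk1. lia. }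
  pose proof (Hd k ltac:(lra)) as Dk.
  pose proof (Hd (k + 1)%Z ltac:(rewrite plus_IZR; simpl; lra)) as Dk1.
  rewrite plus_IZR in Dk1. simpl in Dk1.
  rewrite Rabs_left1 in Dk by lra. rewrite Rabs_pos_eq in Dk1 by lra.
  apply Rabs_def2 in HYX.
  split.
  - symmetry. apply Int_part_spec. lra.
  - rewrite <- (Int_part_spec (- Y) (- k - 1)), <- (Int_part_spec (- X) (- k - 1)); [easy | |];
      rewrite minus_IZR, opp_IZR; lra.
Qed.

Lemma Rpower_inv_pow (q : nat) (m : R) : 0 < m -> Rpower m (/ INR (S q)) ^ S q = m.
Proof.
  intro Hm. rewrite <- Rpower_pow, Rpower_mult, Rinv_l, Rpower_1 by
    (try apply Rpower_gt_0; try apply not_0_INR; easy).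
  reflexivity.
Qed.

Lemma Int_part_inv_A_ns (q n : nat) : (1 <= q)%nat -> (4 * S q * 3 ^ q + 1 <= n)%nat ->
  let s := / INR (S q) in
  let X := 2 * Rpower (INR n - / 2) s in
  Int_part (/ A_ns n s) = Int_part X /\ Int_part (- / A_ns n s) = Int_part (- X).
Proof.
  intros Hq Hn s X.
  set (p := INR (S q)) in s.
  set (m := INR n - / 2) in X.
  set (t := Rpower m s) in X.
  set (B := (2 * t + 1) ^ q).
  assert (Hp : 2 <= p) by (unfold p; rewrite S_INR; apply le_INR in Hq; simpl in Hq; lra).
  assert (Hm : 4 * p * 3 ^ q < m).
  { apply le_INR in Hn. rewrite plus_INR, !mult_INR, pow_INR, INR_1 in Hn.
    replace (INR 4) with 4 in Hn by (simpl; ring). replace (INR 3) with 3 in Hn by (simpl; ring).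
    unfold m, p. lra. }
  assert (H3q : 1 <= 3 ^ q) by (apply pow_R1_Rle; lra).
  assert (Hroot : t ^ S q = m) by (apply Rpower_inv_pow; nra).
  assert (Ht : 1 <= t).
  { unfold t. replace 1 with (Rpower 1 s) by (unfold Rpower; rewrite ln_1, Rmult_0_r; apply exp_0).
    apply Rle_Rpower_l; [unfold s; left; apply Rinv_0_lt_compat | ]; nra. }
  assert (HB : 0 < B) by (apply pow_lt; lra).
  assert (HtB : t * B <= 3 ^ q * m).
  { rewrite <- Hroot. replace (3 ^ q * t ^ S q) with (t * (3 * t) ^ q)
      by (rewrite Rpow_mult_distr; simpl; ring).
    apply Rmult_le_compat_l; [lra | apply pow_incr; lra]. }
  apply (Int_part_stable X _ (/ (p * B))); [unfold X; lra | |].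
  - intros k Hk. apply (Rabs_IZR_sub_two_root_ge q n); [exact Hq | lra | exact Hroot | exact Hk].
  - assert (Hs : 0 < s <= 1).
    { unfold s. split; [apply Rinv_0_lt_compat; lra |].
      rewrite <- Rinv_1. apply Rinv_le_contravar; lra. }
    assert (Hn2 : (2 <= n)%nat) by (apply INR_le; simpl; unfold m in Hm; nra).
    apply (Rle_lt_trans _ _ _ (A_ns_inv_error s n Hs Hn2)). fold m t.
    assert (Hm2 : 0 < m ^ 2) by (apply pow_lt; nra).
    apply (Rmult_lt_reg_r (p * B * m ^ 2)); [apply Rmult_lt_0_compat; [nra | lra] |].
    replace (4 * t / m ^ 2 * (p * B * m ^ 2)) with (4 * p * (t * B)) by (field; nra).
    replace (/ (p * B) * (p * B * m ^ 2)) with (m * m) by (field; nra).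
    apply (Rle_lt_trans _ (4 * p * (3 ^ q * m))); [apply Rmult_le_compat_l; lra |].
    rewrite <- Rmult_assoc. apply Rmult_lt_compat_r; nra.
Qed.

Theorem corollary3p3 (p : nat) (hp : (5 <= p)%nat) :
  let s := / INR p in
  exists n0 n1 : nat, (0 < n0)%nat /\ (0 < n1)%nat /\
    (forall n : nat, (n0 <= n)%nat -> Nat.Even n ->
       floorR (/ A_ns n s) = floorR (2 * Rpower (INR n - / 2) s)) /\
    (forall n : nat, (n1 <= n)%nat -> Nat.Odd n ->
       floorR (/ B_ns n s) = floorR (- 2 * Rpower (INR n - / 2) s)).
Proof.
  intro s. destruct p as [| q]; [lia |].
  exists (4 * S q * 3 ^ q + 1)%nat, (4 * S q * 3 ^ q + 1)%nat.
  repeat split; try lia; intros n Hn _; unfold floorR;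
    destruct (Int_part_inv_A_ns q n ltac:(lia) Hn) as [HA HB]; [exact HA |].
  replace (B_ns n s) with (- A_ns n s) by (symmetry; apply Series_opp).
  replace (-2 * Rpower (INR n - / 2) s) with (- (2 * Rpower (INR n - / 2) s)) by ring.
  rewrite Rinv_opp. exact HB.
Qed.
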